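(* Let $n\ge 1$ and $r\in\{0,1,\dots,n-1\}$. For permutations $\mathbf{u},\mathbf{v}\in S_n$ in one-line notation $\mathbf{u}=[u(1),\dots,u(n)]$, $\mathbf{v}=[v(1),\dots,v(n)]$, define the cost $C(\mathbf{u}\to\mathbf{v})=\max_{i\in\{1,\dots,n\}}\bigl(v^{-1}(i)-u^{-1}(i)\bigr)$, and for $\mathbf{u}\in S_n$ define the ball $B_{n,r}(\mathbf{u})=\{\mathbf{v}\in S_n : C(\mathbf{u}\to\mathbf{v})\le r\}$. Then for every $\mathbf{u}\in S_n$, $$|B_{n,r}(\mathbf{u})|=r!\,(r+1)^{n-r}.$$
   Context: Here $u^{-1}(i)$ denotes the position of the element $i$ in the sequence $[u(1),\dots,u(n)]$, and similarly for $v^{-1}$. The cost $C(\mathbf{u}\to\mathbf{v})$ is thus the maximum, over elements $i$, of the increase in position of $i$ when passing from $\mathbf{u}$ to $\mathbf{v}$. *)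

From mathcomp Require Import all_boot all_order all_algebra all_fingroup.
Set Implicit Arguments. Unset Strict Implicit. Unset Printing Implicit Defensive.
Import Order.TTheory GRing.Theory Num.Theory.
Local Open Scope ring_scope.

(* Permutations of S_n, n = m.+1 >= 1, are {perm 'I_n}; positions and values
   are 0-based (shifting by 1 does not affect differences).
   u i = value at position i (one-line notation); (u^-1)%g x = position of x. *)

(* Cost C(u -> v) = max_i (v^{-1}(i) - u^{-1}(i)), computed in int; the
   iterated max is seeded with the term for i = ord0 (the index set is
   nonempty), so this is exactly the maximum over all i. *)
Definition cost (m : nat) (u v : {perm 'I_m.+1}) : int :=
  let d := fun i : 'I_m.+1 =>
    (nat_of_ord ((v^-1)%g i))%:Z - (nat_of_ord ((u^-1)%g i))%:Z in
  \big[Num.max/d ord0]_(i < m.+1) d i.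

Definition ball (m r : nat) (u : {perm 'I_m.+1}) : {set {perm 'I_m.+1}} :=
  [set v | cost u v <= r%:Z].

(* Writing s = u * v^-1, i.e. s j = v^-1 (u j), the condition C(u -> v) <= r
   says that s moves no position j beyond j + r, and v |-> s is a bijection.
   Such s are built by choosing s 0, s 1, ... in turn: at position j the
   available values are those below min(j + r + 1, n) not used yet, and the
   bound is nondecreasing in j, so exactly min(j + r + 1, n) - j of them are
   free whatever the earlier choices.  The product of these counts is
   (r + 1)^(n - r) * r!. *)

From mathcomp Require Import all_boot all_order all_algebra all_fingroup.
From mathcomp Require Import zify.
Set Implicit Arguments.
Unset Strict Implicit.
Unset Printing Implicit Defensive.
Import Order.TTheory.

Section BoundedUniqSeqs.

Variable b : nat -> nat.

Definition bounded_uniq k (s : seq nat) :=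
  [&& size s == k, uniq s & all (fun i => nth 0 s i < b i) (iota 0 k)].

Fixpoint bounded_uniq_seqs k : seq (seq nat) :=
  if k is k'.+1 then
    [seq rcons s x | s <- bounded_uniq_seqs k',
                     x <- [seq x <- iota 0 (b k') | x \notin s]]
  else [:: [::]].

Lemma bounded_uniq_rcons k s x :
  bounded_uniq k.+1 (rcons s x) = [&& bounded_uniq k s, x \notin s & x < b k].
Proof.
rewrite /bounded_uniq size_rcons eqSS rcons_uniq -addn1 iotaD all_cat /= andbT.
have [<- | //] := eqVneq (size s) k.
rewrite nth_rcons ltnn eqxx (@eq_in_all _ _ (fun i => nth 0 s i < b i)).
  by rewrite add0n; case: (x \in s); case: (uniq s); rewrite /= ?andbF.
by move=> i; rewrite mem_iota /= nth_rcons => ->.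
Qed.

Lemma mem_bounded_uniq_seqs k s :
  (s \in bounded_uniq_seqs k) = bounded_uniq k s.
Proof.
elim: k s => [|k IHk] s; first by case: s.
apply/allpairsPdep/idP => [[s' [x [s's x_ext ->]]] | ].
  by move: x_ext; rewrite mem_filter mem_iota bounded_uniq_rcons -IHk s's add0n.
case/lastP: s => [|s' x]; first by rewrite /bounded_uniq.
rewrite bounded_uniq_rcons -IHk => /and3P[s's xs xb].
by exists s', x; rewrite mem_filter mem_iota xs xb.
Qed.

Lemma bounded_uniq_seqs_uniq k : uniq (bounded_uniq_seqs k).
Proof.
elim: k => [|k IHk] //=; apply: allpairs_uniq_dep => //.
  by move=> s _; rewrite filter_uniq ?iota_uniq.
by move=> [s1 x1] [s2 x2] _ _ /= /rcons_inj[-> ->].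
Qed.

Hypothesis b_homo : {homo b : i j / i <= j}.

Lemma size_extensions k s : bounded_uniq k s ->
  size [seq x <- iota 0 (b k) | x \notin s] = b k - k.
Proof.
case/and3P=> /eqP s_size s_uniq s_bounded.
have s_sub : {subset s <= iota 0 (b k)}.
  move=> x /(nthP 0)[i i_lt <-]; rewrite s_size in i_lt.
  rewrite mem_iota /= (leq_trans _ (b_homo (ltnW i_lt))) //.
  by apply: (allP s_bounded); rewrite mem_iota.
have count_s : count (mem s) (iota 0 (b k)) = k.
  rewrite -size_filter -[RHS]s_size; apply/perm_size/uniq_perm => //.
    by rewrite filter_uniq ?iota_uniq.
  by move=> x; rewrite mem_filter andb_idr //; apply: s_sub.
rewrite size_filter -[b k in RHS](size_iota 0) -(count_predC (mem s)).
by rewrite count_s addKn.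
Qed.

Lemma size_bounded_uniq_seqs k :
  size (bounded_uniq_seqs k) = \prod_(i < k) (b i - i).
Proof.
elim: k => [|k IHk]; first by rewrite big_ord0.
rewrite big_ord_recr -IHk /= size_allpairs_dep.
have /eq_in_map-> : {in bounded_uniq_seqs k,
    (fun s => size [seq x <- iota 0 (b k) | x \notin s]) =1 fun=> b k - k}.
  by move=> s; rewrite mem_bounded_uniq_seqs; apply: size_extensions.
by elim: (bounded_uniq_seqs k) => //= s ss ->; rewrite mulSn.
Qed.

End BoundedUniqSeqs.

Lemma prod_band_widths n r : r <= n ->
  \prod_(i < n) (minn (i + r).+1 n - i) = r`! * r.+1 ^ (n - r).
Proof.
move=> r_le_n; rewrite -(big_mkord xpredT (fun i => minn (i + r).+1 n - i)).
rewrite (@big_cat_nat _ _ _ (n - r)) ?leq_subr //= mulnC; congr (_ * _).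
  rewrite -{1}(add0n (n - r)) big_addn subKn // -ffactnn ffact_prod big_mkord.
  by apply: eq_bigr => i _; have := ltn_ord i; lia.
have -> : r.+1 ^ (n - r) = \prod_(0 <= i < n - r) r.+1.
  by rewrite prod_nat_const_nat subn0.
by apply: eq_big_nat => i /andP[_ i_lt]; lia.
Qed.

Section PermSeq.

Variable m : nat.
Local Notation n := m.+1.

Definition perm_seq (s : {perm 'I_n}) : seq nat :=
  mkseq (fun i => val (s (inord i))) n.

Lemma nth_perm_seq s i : i < n -> nth 0 (perm_seq s) i = s (inord i).
Proof. by move=> i_lt; rewrite nth_mkseq. Qed.

Lemma perm_seq_inj : injective perm_seq.
Proof.
move=> s t eq_st; apply/permP => i; apply: ord_inj.
by rewrite -[i]inord_val -!nth_perm_seq ?eq_st.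
Qed.

Lemma perm_seq_uniq s : uniq (perm_seq s).
Proof.
apply/(uniqP 0) => i j; rewrite !inE size_mkseq => i_lt j_lt.
rewrite !nth_perm_seq // => /ord_inj/perm_inj/(congr1 (@nat_of_ord n)).
by rewrite !inordK.
Qed.

Lemma perm_seq_onto t :
  size t = n -> uniq t -> (forall i, i < n -> nth 0 t i < n) ->
  exists s, perm_seq s = t.
Proof.
move=> t_size t_uniq t_lt.
pose f := [ffun i : 'I_n => inord (nth 0 t i) : 'I_n].
have f_inj : injective f.
  move=> i j; rewrite !ffunE => /(congr1 (@nat_of_ord n)).
  rewrite !inordK ?t_lt // => eq_ij.
  by apply/ord_inj/eqP; rewrite -(nth_uniq 0 _ _ t_uniq) ?t_size // eq_ij.
exists (perm f_inj); apply: (@eq_from_nth _ 0); first by rewrite size_mkseq.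
move=> i; rewrite size_mkseq => i_lt.
by rewrite nth_perm_seq // permE ffunE !inordK ?t_lt.
Qed.

Lemma card_bounded_perms (b : nat -> nat) :
  #|[set s : {perm 'I_n} | [forall i, s i < b i]]|
  = size (bounded_uniq_seqs (fun i => minn (b i) n) n).
Proof.
set b' := fun i => minn (b i) n.
rewrite cardE -(size_map perm_seq); apply/perm_size/uniq_perm.
- by rewrite map_inj_uniq ?enum_uniq //; apply: perm_seq_inj.
- exact: bounded_uniq_seqs_uniq.
move=> t; rewrite mem_bounded_uniq_seqs; apply/mapP/and3P.
  case=> s; rewrite mem_enum inE => /forallP s_bounded ->.
  split; rewrite ?size_mkseq ?perm_seq_uniq //.
  apply/allP => i; rewrite mem_iota /= => i_lt.
  by rewrite nth_perm_seq // leq_min ltn_ord -{2}(inordK i_lt) s_bounded.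
case=> /eqP t_size t_uniq /allP t_bounded.
have t_lt i : i < n -> nth 0 t i < b' i.
  by move=> i_lt; apply: t_bounded; rewrite mem_iota.
have [s def_t] : exists s, perm_seq s = t.
  by apply: perm_seq_onto => // i /t_lt; rewrite leq_min => /andP[].
exists s; rewrite // mem_enum inE; apply/forallP => i.
have := t_lt i (ltn_ord i); rewrite -def_t nth_perm_seq // inord_val leq_min.
by case/andP.
Qed.

End PermSeq.

Lemma cost_le m (u v : {perm 'I_m.+1}) (r : nat) :
  (cost u v <= r%:Z)%R = [forall i, (u * v^-1)%g i <= i + r].
Proof.
have shift i : ((v^-1)%g i <= (u^-1)%g i + r) =
    (((v^-1)%g i)%:Z - ((u^-1)%g i)%:Z <= r%:Z)%R.
  by move: (nat_of_ord _) (nat_of_ord _) => a c; apply/idP/idP; lia.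
apply/bigmax_leP/forallP => [[_ le_r] i | le_r].
  by have := le_r (u i) isT; rewrite -shift permK permM.
have le_r' i : (((v^-1)%g i)%:Z - ((u^-1)%g i)%:Z <= r%:Z)%R.
  by have := le_r ((u^-1)%g i); rewrite permM permKV shift.
by split=> [|i _]; apply: le_r'.
Qed.

Lemma card_ball m r (u : {perm 'I_m.+1}) :
  #|ball r u| = #|[set s : {perm 'I_m.+1} | [forall i, s i <= i + r]]|.
Proof.
have mul_inj : injective (fun s : {perm 'I_m.+1} => (s^-1 * u)%g).
  by move=> s t /mulIg/invg_inj.
rewrite -(card_imset _ mul_inj); apply: eq_card => v.
rewrite inE cost_le; apply/idP/imsetP => [v_ball | [s + ->]].
  by exists (u * v^-1)%g; rewrite ?inE // invMg invgK mulgKV.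
by rewrite inE invMg invgK mulKVg.
Qed.

Theorem theorem2 (m r : nat) (hr : (r < m.+1)%N) (u : {perm 'I_m.+1}) :
  #|ball r u| = (r`! * (r.+1) ^ (m.+1 - r))%N.
Proof.
rewrite card_ball (@card_bounded_perms m (fun i => (i + r).+1)).
rewrite size_bounded_uniq_seqs.
  exact: prod_band_widths (ltnW hr).
by move=> i j le_ij /=; lia.
Qed.
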